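(* Let $K_j$ be a finite nonempty set of downstream customers, let $B=(B_{jk})_{k\in K_j}$ with $B_{jk}\in(0,1)$, and consider the distributor's objective $$\mathcal{U}_j(q)=\sum_{k\in K_j}\mathbb{E}\big[B_{jk}P_{jk}(q)q\big]-c_i(q)q,\qquad c_i(q)=p_i^t-\beta_i(q),\quad q\in[0,q^{\max}].$$ Under Assumptions A.2–A.4, let $q^*(B,p_i^t)$ denote the unique interior maximizer of $\mathcal{U}_j$. Then: (i) $q^*$ is nondecreasing in each belief parameter $B_{jk}$, provided the local condition $\frac{d}{dq}\mathbb{E}[P_{jk}(q)q]\big|_{q=q^*}\ge0$ holds; (ii) $q^*$ is nonincreasing in the supplier price $p_i^t$.
   Context: A.2: each resale price function $P_{jk}$ is continuously differentiable, strictly decreasing ($P_{jk}'<0$) and concave ($P_{jk}''\le0$), and the relevant expectations are finite. A.3: the effective procurement cost $c_i(q)=p_i^t-\beta_i(q)$ (with $\beta_i$ a volume rebate not depending on $p_i^t$) is continuously differentiable with $c_i'(q)\ge0$ and $c_i''(q)\ge0$. A.4: feasible quantities lie in $[0,q^{\max}]$ and an interior optimum satisfies the first-order condition $\sum_k\frac{\partial}{\partial q}\mathbb{E}[B_{jk}P_{jk}(q)q]=c_i'(q)q+c_i(q)$. *)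

From HB Require Import structures.
From mathcomp Require Import all_boot all_order all_algebra.
From mathcomp Require Import all_classical all_reals all_analysis.
Set Implicit Arguments. Unset Strict Implicit. Unset Printing Implicit Defensive.
Import Order.TTheory GRing.Theory Num.Theory.
Import numFieldNormedType.Exports.
Local Open Scope ring_scope.

Definition C1 (R : realType) (f : R -> R) : Prop :=
  (forall x, derivable f x 1) /\ continuous (derive1 f).

Definition twice_derivable (R : realType) (f : R -> R) : Prop :=
  (forall x, derivable f x 1) /\ (forall x, derivable (derive1 f) x 1).

Definition cost (R : realType) (pt : R) (beta : R -> R) : R -> R :=
  fun q => pt - beta q.

(* distributor objective U_j(q) = sum_k B_k * Pbar_k(q) * q - c_i(q) * q,
   where Pbar_k(q) = E[P_jk(q)] is the expected resale price function *)
Definition objective (R : realType) (K : finType) (B : K -> R)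
  (P : K -> R -> R) (pt : R) (beta : R -> R) (q : R) : R :=
  \sum_(k : K) B k * P k q * q - cost pt beta q * q.

Definition interior_maximizer (R : realType) (f : R -> R) (qmax q : R) : Prop :=
  0 < q < qmax /\ (forall q', 0 <= q' <= qmax -> f q' <= f q).

Definition unique_interior_maximizer (R : realType) (f : R -> R) (qmax q : R) : Prop :=
  interior_maximizer f qmax q /\
  (forall q', interior_maximizer f qmax q' -> q' = q).

From HB Require Import structures.
From mathcomp Require Import all_boot all_order all_algebra.
From mathcomp Require Import all_classical all_reals all_analysis.
From mathcomp Require Import ring lra.

Set Implicit Arguments.
Unset Strict Implicit.
Unset Printing Implicit Defensive.

Import Order.TTheory GRing.Theory Num.Theory.
Import numFieldNormedType.Exports.
Local Open Scope ring_scope.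

(* Revealed preference: if q1 maximizes U and q2 maximizes U + h, then
   h q1 <= h q2.  Raising B_k adds (B'_k - B_k) P_k(q) q to the objective and
   raising the price adds -(p' - p) q, so the maximizer can only move towards
   larger values of P_k(q) q, resp. of -q.  The tangent-line inequality for the
   concave P_k, with P_k' < 0 and nonnegative marginal revenue at q1, makes
   P_k(q) q strictly smaller at every q2 < q1.  An unchanged parameter leaves
   the objective unchanged, and uniqueness gives q1 = q2.  Neither the cost
   assumptions A.3 nor the bounds on B are needed. *)

Lemma derive1_mul_id (R : numFieldType) (f : R -> R) x : derivable f x 1 ->
  derive1 (fun y => f y * y) x = derive1 f x * x + f x.
Proof.
move=> fx; rewrite derive1E -[fun y => _]/(f * id) deriveM // derive_id -derive1E.
by rewrite /GRing.scale /= mulr1 addrC mulrC.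
Qed.

Section Concave.
Variables (R : realType) (f : R -> R).
Hypothesis f_derivable : forall x, derivable f x 1.
Hypothesis f'_derivable : forall x, derivable (derive1 f) x 1.
Hypothesis f''_le0 : forall x, derive1 (derive1 f) x <= 0.

Lemma derive1_nonincreasing x y : x <= y -> derive1 f y <= derive1 f x.
Proof.
move=> xy; apply: (@ler0_derive1_le_cc _ _ x y) => //.
- exact: derivable_within_continuous.
- by rewrite in_itv /= lexx xy.
- by rewrite in_itv /= lexx xy.
Qed.

Lemma mean_value a b : a <= b ->
  exists2 c, c \in `[a, b]%R & f b - f a = derive1 f c * (b - a).
Proof.
move=> ab; apply: MVT_segment => //.
- by move=> z _; rewrite derive1E; apply: derivableP.
- exact: derivable_within_continuous.
Qed.

Lemma concave_le_tangent x y : f y <= f x + derive1 f x * (y - x).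
Proof.
have [yx|xy] := leP y x.
- have [c /[!in_itv] /andP[_ cx] mvt] := mean_value yx.
  have slope_ge : derive1 f x <= derive1 f c := derive1_nonincreasing cx.
  have : derive1 f x * (x - y) <= derive1 f c * (x - y).
    by rewrite ler_wpM2r ?subr_ge0.
  lra.
- have [c /[!in_itv] /andP[xc _] mvt] := mean_value (ltW xy).
  have slope_le : derive1 f c <= derive1 f x := derive1_nonincreasing xc.
  have : derive1 f c * (y - x) <= derive1 f x * (y - x).
    by rewrite ler_wpM2r // subr_ge0 ltW.
  lra.
Qed.

Lemma revenue_lt_of_lt q1 q2 :
  derive1 f q1 < 0 -> 0 <= derive1 (fun q => f q * q) q1 -> 0 <= q2 < q1 ->
  f q2 * q2 < f q1 * q1.
Proof.
rewrite derive1_mul_id // => f'_lt0 marginal_ge0 /andP[q2_ge0 q21].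
have tangent : f q2 * q2 <= (f q1 + derive1 f q1 * (q2 - q1)) * q2.
  by rewrite ler_wpM2r // concave_le_tangent.
have : 0 < (q1 - q2) * (f q1 + derive1 f q1 * q2).
  by rewrite mulr_gt0 ?subr_gt0 //; nra.
nra.
Qed.

End Concave.

Section Maximizers.
Variables (R : realType) (qmax : R).

Lemma interior_maximizer_shift_le (U V h : R -> R) q1 q2 :
  (forall q, V q = U q + h q) ->
  interior_maximizer U qmax q1 -> interior_maximizer V qmax q2 -> h q1 <= h q2.
Proof.
move=> UhV [/andP[q1_gt0 q1_lt] U_le] [/andP[q2_gt0 q2_lt] V_le].
have U21 : U q2 <= U q1 by rewrite U_le // !ltW.
have : V q1 <= V q2 by rewrite V_le // !ltW.
rewrite !UhV; lra.
Qed.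

Lemma unique_interior_maximizer_eq (U V : R -> R) q1 q2 : U =1 V ->
  unique_interior_maximizer U qmax q1 -> unique_interior_maximizer V qmax q2 ->
  q1 = q2.
Proof. by move=> /funext -> [_ uniq1] [max2 _]; rewrite (uniq1 _ max2). Qed.

End Maximizers.

Section Objective.
Variables (R : realType) (K : finType) (P : K -> R -> R) (beta : R -> R).

Lemma objective_update_belief (B B' : K -> R) k pt :
  (forall l, l != k -> B' l = B l) -> forall q,
  objective B' P pt beta q = objective B P pt beta q + (B' k - B k) * (P k q * q).
Proof.
move=> B'B q; rewrite /objective (bigD1 k) //= [in RHS](bigD1 k) //=.
rewrite (eq_bigr (fun l => B l * P l q * q)) => [|l /B'B -> //].
lra.
Qed.

Lemma objective_update_price (B : K -> R) pt pt' q :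
  objective B P pt' beta q = objective B P pt beta q + (pt - pt') * q.
Proof. rewrite /objective /cost; lra. Qed.

Lemma maximizer_nondecreasing_in_belief (B B' : K -> R) k pt qmax q1 q2 :
  (forall x, derivable (P k) x 1) -> (forall x, derivable (derive1 (P k)) x 1) ->
  (forall x, derive1 (derive1 (P k)) x <= 0) -> derive1 (P k) q1 < 0 ->
  (forall l, l != k -> B' l = B l) -> B k <= B' k ->
  unique_interior_maximizer (objective B P pt beta) qmax q1 ->
  unique_interior_maximizer (objective B' P pt beta) qmax q2 ->
  0 <= derive1 (fun q => P k q * q) q1 ->
  q1 <= q2.
Proof.
move=> Pk_d1 Pk_d2 Pk_concave Pk'_lt0 B'B; rewrite le_eqVlt.
move=> /orP[/eqP Bk_eq max1 max2 _|Bk_lt [max1 _] [max2 _] marginal_ge0].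
  suff -> : q1 = q2 by [].
  apply: unique_interior_maximizer_eq max1 max2 => q.
  by rewrite (objective_update_belief pt B'B) Bk_eq subrr mul0r addr0.
have := interior_maximizer_shift_le (objective_update_belief pt B'B) max1 max2.
rewrite ler_pM2l ?subr_gt0 // leNgt; apply: contraNle => q21.
have [/andP[q2_gt0 _] _] := max2.
by apply: (revenue_lt_of_lt Pk_d1 Pk_d2 Pk_concave); rewrite // ltW.
Qed.

Lemma maximizer_nonincreasing_in_price (B : K -> R) pt pt' qmax q1 q2 :
  pt <= pt' ->
  unique_interior_maximizer (objective B P pt beta) qmax q1 ->
  unique_interior_maximizer (objective B P pt' beta) qmax q2 ->
  q2 <= q1.
Proof.
rewrite le_eqVlt => /orP[/eqP <- max1 max2|pt_lt [max1 _] [max2 _]].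
  by rewrite (unique_interior_maximizer_eq _ max1 max2).
have := interior_maximizer_shift_le (objective_update_price B pt pt') max1 max2.
by rewrite ler_nM2l // subr_lt0.
Qed.

End Objective.

Theorem theorem5 (R : realType) (K : finType) (qmax : R)
    (P : K -> R -> R) (beta : R -> R)
    (HK : (0 < #|K|)%N)
    (Hqmax : 0 < qmax)
    (* A.2 *)
    (HP_C1 : forall k, C1 (P k))
    (HP_dec : forall k x, derive1 (P k) x < 0)
    (HP_conc : forall k, twice_derivable (P k) /\ forall x, derive1 (derive1 (P k)) x <= 0)
    (* A.3 (beta does not depend on the price) *)
    (Hc_C1 : forall pt, C1 (cost pt beta))
    (Hc_d1 : forall pt x, 0 <= derive1 (cost pt beta) x)
    (Hc_d2 : forall pt, twice_derivable (cost pt beta) /\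
                        forall x, 0 <= derive1 (derive1 (cost pt beta)) x) :
  (* (i) monotone in each belief parameter B_k, under the local condition *)
  (forall (B B' : K -> R) (k : K) (pt q1 q2 : R),
      (forall l, 0 < B l < 1) -> (forall l, 0 < B' l < 1) ->
      (forall l, l != k -> B' l = B l) -> B k <= B' k ->
      unique_interior_maximizer (objective B P pt beta) qmax q1 ->
      unique_interior_maximizer (objective B' P pt beta) qmax q2 ->
      0 <= derive1 (fun q => P k q * q) q1 ->
      q1 <= q2) /\
  (* (ii) nonincreasing in the supplier price p_i^t *)
  (forall (B : K -> R) (pt pt' q1 q2 : R),
      (forall l, 0 < B l < 1) -> pt <= pt' ->
      unique_interior_maximizer (objective B P pt beta) qmax q1 ->
      unique_interior_maximizer (objective B P pt' beta) qmax q2 ->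
      q2 <= q1).
Proof.
split.
- move=> B B' k pt q1 q2 _ _ B'B Bk_le max1 max2.
  have [[Pk_d1 Pk_d2] Pk_concave] := HP_conc k.
  exact: (maximizer_nondecreasing_in_belief (P := P) Pk_d1 Pk_d2 Pk_concave
           (HP_dec k q1) B'B Bk_le max1 max2).
- move=> B pt pt' q1 q2 _.
  exact: maximizer_nonincreasing_in_price.
Qed.
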